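(* Consider a congestion game in which each $\mathcal{A}_i$ is the set of all $k$-subsets of $\mathcal{F}$ and which admits a strict Nash equilibrium $a^*$ (with $\omega_i^*$ the point mass on $a_i^*$). Let $\epsilon>0$ and $U_\epsilon$ be as in Lemma 1, and let $M\ge|\log(\epsilon/(2kF))|$ be such that $U_M\subseteq U_\epsilon$. Suppose every player runs CongestEXP with expected-reward feedback and learning rate $\eta$, with initial values $\tilde y_i^0$ chosen so that $\omega^0\in U_M$. Then for every $i\in[n]$ and every $t$, \[ \|\omega_i^t-\omega_i^*\|_1\le 2kF\exp(-M-\eta\epsilon t). \]
   Context: Congestion game: $n$ players, facility set $\mathcal{F}$ with $F$ facilities, facility rewards $r^f\in[0,1]$ depending on a joint action only through the load of $f$; $r_i(a)=\sum_{f\in a_i}r^f(a)$, extended to mixed strategies by expectation under independent sampling. Strict Nash equilibrium: pure $a^*$ with $r_i(a_i^*,a_{-i}^* )>r_i(a_i,a_{-i}^* )$ for all $i$, $a_i\ne a_i^*$. Lemma 1: there are $\epsilon>0$ and a neighborhood $U_\epsilon$ of $a^*$ in joint mixed strategy space with $r_i(a_i^*,\tilde\omega_{-i})-r_i(a_i,\tilde\omega_{-i})\ge\epsilon$ for all $\tilde\omega\in U_\epsilon$, all $i$, $a_i\ne a_i^*$. CongestEXP with expected-reward feedback (player $i$, learning rate $\eta$): initial reals $\tilde y_i^0(f)$; at round $t\ge1$, $\tilde y_i^t(f)=\mathbb{E}_{a_{-i}\sim\omega_{-i}^t}[r^f(a_i,a_{-i})]$ for any $a_i\ni f$. Strategies: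 $\omega_i^t(a)\propto\prod_{f\in a}\exp(\eta\sum_{j=0}^{t}\tilde y_i^j(f))$ over $a\in\mathcal{A}_i$ (indexing so that $\omega^0$ is determined by $\tilde y^0$). Define $\tilde z_i^t(a_i)=\eta\sum_{j=0}^t(\sum_{f\in a_i}\tilde y_i^j(f)-\sum_{f\in a_i^*}\tilde y_i^j(f))$ and $U_M=\{\omega^t:\tilde z_i^t(a_i)\le -M\ \forall i,\ \forall a_i\ne a_i^*\}$. *)

From HB Require Import structures.
From mathcomp Require Import all_boot all_order all_algebra.
From mathcomp Require Import all_classical all_reals all_analysis.
Set Implicit Arguments. Unset Strict Implicit. Unset Printing Implicit Defensive.
Import Order.TTheory GRing.Theory Num.Theory.
Local Open Scope ring_scope.
Local Open Scope classical_set_scope.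

Section Congestion.
Variables (R : realType) (n F k : nat).

Definition act := {a : {set 'I_F} | #|a| == k}.
Definition jact := {ffun 'I_n -> act}.
(* joint mixed strategies (player i's mixed strategy is omega i : act -> R) *)
Definition profile := 'I_n -> act -> R.

Definition load (a : jact) (f : 'I_F) : nat := #|[set j | f \in val (a j)]|.

Definition fac_reward (c : 'I_F -> nat -> R) (f : 'I_F) (a : jact) : R :=
  c f (load a f).

Definition reward (c : 'I_F -> nat -> R) (i : 'I_n) (a : jact) : R :=
  \sum_(f in val (a i)) fac_reward c f a.

Definition expect (om : profile) (g : jact -> R) : R :=
  \sum_(a : jact) (\prod_(j < n) om j (a j)) * g a.

Definition pure (a : act) : act -> R := fun b => (b == a)%:R.

Definition dev (om : profile) (i : 'I_n) (p : act -> R) : profile :=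
  fun j => if j == i then p else om j.

Definition mixed_reward (c : 'I_F -> nat -> R) (om : profile) (i : 'I_n)
  (a : act) : R := expect (dev om i (pure a)) (reward c i).

Definition is_mixed (om : profile) : Prop :=
  forall i, (forall a, 0 <= om i a) /\ \sum_(a : act) om i a = 1.

Definition strict_NE (c : 'I_F -> nat -> R) (astar : 'I_n -> act) : Prop :=
  forall (i : 'I_n) (a : act), a != astar i ->
    reward c i [ffun j => if j == i then a else astar j] <
    reward c i [ffun j => astar j].

(* U_eps as in Lemma 1: a neighborhood of a* in joint mixed strategy space
   on which a*_i beats every other a_i by at least eps against omega_{-i} *)
Definition lemma1_nbhd (c : 'I_F -> nat -> R) (astar : 'I_n -> act) (eps : R)
  (U : set profile) : Prop :=
  [/\ (forall om, U om -> is_mixed om),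
      (exists2 d : R, 0 < d & forall om, is_mixed om ->
          (forall i a, `|om i a - pure (astar i) a| < d) -> U om) &
      (forall om, U om -> forall i a, a != astar i ->
          eps <= mixed_reward c om i (astar i) - mixed_reward c om i a)].

Definition softmax (eta : R) (Y : 'I_n -> 'I_F -> R) : profile :=
  fun i a => (\prod_(f in val a) expR (eta * Y i f)) /
             (\sum_(b : act) \prod_(f in val b) expR (eta * Y i f)).

Definition cum (y : nat -> 'I_n -> 'I_F -> R) (t : nat) : 'I_n -> 'I_F -> R :=
  fun i f => \sum_(j < t.+1) y j i f.

Definition cexp_strategy (eta : R) (y : nat -> 'I_n -> 'I_F -> R) (t : nat)
  : profile := softmax eta (cum y t).

Definition expected_feedback (c : 'I_F -> nat -> R) (eta : R)
  (y : nat -> 'I_n -> 'I_F -> R) : Prop :=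
  forall (t : nat) (i : 'I_n) (f : 'I_F) (a : act), f \in val a ->
    y t.+1 i f = expect (dev (cexp_strategy eta y t) i (pure a)) (fac_reward c f).

(* U_M: strategy profiles (of CongestEXP form, from cumulative scores Y) with
   z_i(a_i) = eta*(sum_{f in a_i} Y_i f - sum_{f in a*_i} Y_i f) <= -M *)
Definition UM (eta M : R) (astar : 'I_n -> act) : set profile :=
  [set om | exists Y : 'I_n -> 'I_F -> R, om = softmax eta Y /\
     forall i (a : act), a != astar i ->
       eta * (\sum_(f in val a) Y i f - \sum_(f in val (astar i)) Y i f) <= - M].

End Congestion.

From HB Require Import structures.
From mathcomp Require Import all_boot all_order all_algebra.
From mathcomp Require Import all_classical all_reals all_analysis.
From mathcomp Require Import ring lra.
Set Implicit Arguments. Unset Strict Implicit. Unset Printing Implicit Defensive.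
Import Order.TTheory GRing.Theory Num.Theory.
Local Open Scope ring_scope.

(* Write score_Y(a) = sum_{f in a} Y(f), so that softmax weights are
   omega(a) ~ exp(eta * score_Y(a)), and let z^t_i(a) = eta * (score(a) -
   score(a*_i)) for the cumulative scores of round t.
   1. Invariant: z^t_i(a) <= -M - eta*eps*t for every a <> a*_i.  At t = 0 this
      is the initial condition omega^0 in U_M (softmax determines the score
      gaps); if it holds at t then omega^t in U_M, which lies in U_eps, so the
      Lemma-1 gap shows that the round-(t+1) feedback favours a*_i over a by at
      least eps, and z decreases by eta*eps.
   2. Counting: every k-subset a <> a*_i is turned, by swapping one facility
      f in a \ a*_i for one g in a*_i \ a, into a subset whose weight is at
      least exp(M + eta*eps*t) times larger; each swap is injective and there
      are at most k*F swaps, so the mass off a*_i is <= kF exp(-M-eta*eps*t).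
   3. The L1 distance of a distribution to a point mass is twice its mass off
      that point, which gives the bound 2kF exp(-M - eta*eps*t).
   The reward bounds, the strictness of a* and the size condition on M only
   serve (in the paper) to make U_M a subset of U_eps, which is assumed here. *)

Lemma l1_dist_point_mass (R : realFieldType) (T : finType) (w : T -> R) (t0 : T) :
  (forall t, 0 <= w t) -> \sum_t w t = 1 ->
  \sum_t `|w t - (t == t0)%:R| = 2 * \sum_(t | t != t0) w t.
Proof.
move=> w_ge0 w_sum1.
have off : \sum_(t | t != t0) `|w t - (t == t0)%:R| = \sum_(t | t != t0) w t.
  by apply: eq_bigr => t /negbTE->; rewrite subr0 ger0_norm.
move: w_sum1; rewrite (bigD1 t0) //= => w_sum1.
rewrite (bigD1 t0) //= eqxx off ler0_norm; last first.
  by rewrite subr_le0 -w_sum1 lerDl sumr_ge0.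
by rewrite -[true%:R]/(1 : R); lra.
Qed.

Section KSubsets.
Variables (R : realType) (F k : nat).

Definition score (Y : 'I_F -> R) (a : act F k) : R := \sum_(f in val a) Y f.

Lemma card_act (a : act F k) : #|val a| = k.
Proof. exact/eqP/(valP a). Qed.

Lemma act_not_subset (a b : act F k) :
  a != b -> exists2 f, f \in val a & f \notin val b.
Proof.
move=> neq_ab; apply/subsetPn; apply: contra neq_ab => sub_ab.
by apply/eqP/val_inj/eqP; rewrite eqEcard sub_ab !card_act /=.
Qed.

(* The k-subset obtained from a by exchanging facility f in a for facility
   g outside a (a itself when these conditions fail). *)
Definition swap (a : act F k) (f g : 'I_F) : act F k :=
  insubd a (g |: (val a :\ f)).

Lemma swapE (a : act F k) f g : f \in val a -> g \notin val a ->
  val (swap a f g) = g |: (val a :\ f).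
Proof.
move=> fa ga; rewrite /swap insubdK // unfold_in /= cardsU1 in_setD1.
rewrite (negbTE ga) andbF /=; apply/eqP/(etrans _ (card_act a)).
by rewrite [in RHS](cardsD1 f (val a)) fa.
Qed.

Lemma swap_neq (a : act F k) f g : f \in val a -> g \notin val a ->
  swap a f g != a.
Proof.
move=> fa ga; have g_in : g \in val (swap a f g) by rewrite swapE // setU11.
by apply: contraNneq ga => eq_a; rewrite -eq_a.
Qed.

Lemma score_swap (Y : 'I_F -> R) (a : act F k) f g :
  f \in val a -> g \notin val a -> score Y a - score Y (swap a f g) = Y f - Y g.
Proof.
move=> fa ga; rewrite /score swapE // big_setU1 /=; last first.
  by rewrite in_setD1 (negbTE ga) andbF.
by rewrite (big_setD1 f fa) /=; ring.
Qed.

Lemma swap_inj (f g : 'I_F) :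
  {in [set a : act F k | (f \in val a) && (g \notin val a)] &,
      injective (fun a => swap a f g)}.
Proof.
move=> a b; rewrite !inE => /andP[fa ga] /andP[fb gb] /(congr1 val).
rewrite !swapE // => /setP eq_ab; apply/val_inj/setP => x.
have := eq_ab x; rewrite !in_setU1 !in_setD1.
case: (eqVneq x f) => [->|_]; first by rewrite fa fb.
by case: (eqVneq x g) => [->|_] //; rewrite (negbTE ga) (negbTE gb).
Qed.

Lemma swap_mass_le (w : act F k -> R) (f g : 'I_F) : (forall a, 0 <= w a) ->
  \sum_(a : act F k)
      (if (f \in val a) && (g \notin val a) then w (swap a f g) else 0)
    <= \sum_b w b.
Proof.
move=> w_ge0; rewrite -big_mkcond /=.
pose A := [set a : act F k | (f \in val a) && (g \notin val a)].
have -> : \sum_(a : act F k | (f \in val a) && (g \notin val a)) w (swap a f g)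
          = \sum_(a in A) w (swap a f g) by apply: eq_bigl => a; rewrite inE.
rewrite -(big_imset _ (@swap_inj f g)) /=.
set B := _ @: A; rewrite [X in _ <= X](bigID (mem B)) /= lerDl.
by apply: sumr_ge0.
Qed.

Lemma offeq_mass_le (w : act F k -> R) (a0 : act F k) (x : R) :
  (forall a, 0 <= w a) -> 0 <= x ->
  (forall (a : act F k) (f g : 'I_F), f \in val a -> f \notin val a0 ->
     g \in val a0 -> g \notin val a -> w a <= x * w (swap a f g)) ->
  \sum_(a | a != a0) w a <= (k * F)%:R * x * \sum_b w b.
Proof.
move=> w_ge0 x_ge0 w_swap.
pose T (a : act F k) (f g : 'I_F) :=
  if (f \in val a) && (g \notin val a) then w (swap a f g) else 0.
have T_ge0 a f g : 0 <= T a f g by rewrite /T; case: ifP.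
have T3_ge0 a : 0 <= \sum_(f < F) \sum_(g in val a0) T a f g.
  by apply: sumr_ge0 => f _; apply: sumr_ge0.
have off_a a : a != a0 -> w a <= x * \sum_(f < F) \sum_(g in val a0) T a f g.
  move=> neq_a; have [f fa fa0] := act_not_subset neq_a.
  have [g ga0 ga] := act_not_subset (contra_neq esym neq_a).
  apply: le_trans (w_swap a f g fa fa0 ga0 ga) _; apply: ler_wpM2l => //.
  rewrite (bigD1 f) //= (bigD1 g) //= {1}/T fa ga /= -addrA lerDl.
  by rewrite addr_ge0 // sumr_ge0 // => f' _; apply: sumr_ge0.
have count : \sum_(a | a != a0) \sum_(f < F) \sum_(g in val a0) T a f g
             <= (k * F)%:R * \sum_b w b.
  apply: (@le_trans _ _ (\sum_a \sum_(f < F) \sum_(g in val a0) T a f g)).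
    by rewrite [X in _ <= X](bigID (fun a => a != a0)) /= lerDl sumr_ge0.
  rewrite exchange_big /=; under eq_bigr do rewrite exchange_big /=.
  apply: (@le_trans _ _ (\sum_(f < F) \sum_(g in val a0) \sum_b w b)).
    by apply: ler_sum => f _; apply: ler_sum => g _; apply: swap_mass_le.
  by rewrite !sumr_const card_ord card_act -mulrnA mulr_natl.
apply: le_trans (ler_sum _ off_a) _.
rewrite -mulr_sumr; apply: le_trans (ler_wpM2l x_ge0 count) _.
by rewrite mulrCA mulrA.
Qed.

End KSubsets.

Section Softmax.
Variables (R : realType) (n F k : nat).

Definition partition (eta : R) (Y : 'I_n -> 'I_F -> R) (i : 'I_n) : R :=
  \sum_(b : act F k) expR (eta * score (Y i) b).

Lemma softmaxE eta (Y : 'I_n -> 'I_F -> R) i (a : act F k) :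
  softmax eta Y i a = expR (eta * score (Y i) a) / partition eta Y i.
Proof.
rewrite /softmax /partition /score mulr_sumr expR_sum; congr (_ / _).
by apply: eq_bigr => b _; rewrite mulr_sumr expR_sum.
Qed.

Lemma partition_gt0 eta (Y : 'I_n -> 'I_F -> R) i (a0 : act F k) :
  0 < partition eta Y i.
Proof.
rewrite /partition (bigD1 a0) //= ltr_pwDl ?expR_gt0 //.
by apply: sumr_ge0 => b _; rewrite expR_ge0.
Qed.

Lemma softmax_gt0 eta (Y : 'I_n -> 'I_F -> R) i (a : act F k) :
  0 < softmax eta Y i a.
Proof. by rewrite softmaxE divr_gt0 ?expR_gt0 // (partition_gt0 _ _ _ a). Qed.

Lemma softmax_sum eta (Y : 'I_n -> 'I_F -> R) i (a0 : act F k) :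
  \sum_(a : act F k) softmax eta Y i a = 1.
Proof.
under eq_bigr do rewrite softmaxE.
by rewrite -mulr_suml divff // lt0r_neq0 // (partition_gt0 _ _ _ a0).
Qed.

Lemma softmax_ratio eta (Y : 'I_n -> 'I_F -> R) i (a b : act F k) :
  softmax eta Y i a
  = expR (eta * (score (Y i) a - score (Y i) b)) * softmax eta Y i b.
Proof. by rewrite !softmaxE mulrA -expRD; congr (expR _ / _); ring. Qed.

Lemma softmax_score_gap eta (Y Y' : 'I_n -> 'I_F -> R) i (a b : act F k) :
  softmax eta Y = softmax eta Y' :> profile R n F k ->
  eta * (score (Y i) a - score (Y i) b) = eta * (score (Y' i) a - score (Y' i) b).
Proof.
move=> eq_soft; apply: expR_inj; apply: (mulIf (lt0r_neq0 (softmax_gt0 eta Y' i b))).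
by rewrite -softmax_ratio -eq_soft -softmax_ratio.
Qed.

End Softmax.

Section Feedback.
Variables (R : realType) (n F k : nat).

Lemma mixed_reward_sum (c : 'I_F -> nat -> R) (om : profile R n F k) i
    (a : act F k) :
  mixed_reward c om i a =
  \sum_(f in val a) expect (dev om i (pure R a)) (fac_reward c f).
Proof.
rewrite /mixed_reward /expect /reward exchange_big /=.
apply: eq_bigr => b _; rewrite -mulr_sumr.
case: (eqVneq (b i) a) => [-> //|bia].
by rewrite (bigD1 i) //= /dev eqxx /pure (negbTE bia) !mul0r.
Qed.

Lemma feedback_score (c : 'I_F -> nat -> R) eta (y : nat -> 'I_n -> 'I_F -> R)
    t i (a : act F k) :
  expected_feedback k c eta y ->
  mixed_reward c (cexp_strategy eta y t) i a = score (y t.+1 i) a.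
Proof.
move=> feedback; rewrite mixed_reward_sum /score.
by apply: eq_bigr => f fa; rewrite (feedback t i f a fa).
Qed.

Lemma score_cumS (y : nat -> 'I_n -> 'I_F -> R) t i (a : act F k) :
  score (cum y t.+1 i) a = score (cum y t i) a + score (y t.+1 i) a.
Proof.
by rewrite /score -big_split /=; apply: eq_bigr => f _; rewrite /cum big_ord_recr.
Qed.

End Feedback.

Local Open Scope classical_set_scope.

Section Dynamics.
Variables (R : realType) (n F k : nat) (c : 'I_F -> nat -> R).
Variables (astar : 'I_n -> act F k) (eps M eta : R) (Ueps : set (profile R n F k)).
Variable (y : nat -> 'I_n -> 'I_F -> R).

Hypothesis eps_gt0 : 0 < eps.
Hypothesis eta_gt0 : 0 < eta.
Hypothesis Ueps_gap : forall om, Ueps om -> forall i a, a != astar i ->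
  eps <= mixed_reward c om i (astar i) - mixed_reward c om i a.
Hypothesis UM_sub : UM eta M astar `<=` Ueps.
Hypothesis feedback : expected_feedback k c eta y.
Hypothesis init : UM eta M astar (cexp_strategy eta y 0).

Definition zscore (t : nat) (i : 'I_n) (a : act F k) : R :=
  eta * (score (cum y t i) a - score (cum y t i) (astar i)).

Lemma zscore_decay t i a : a != astar i -> zscore t i a <= - M - eta * eps * t%:R.
Proof.
elim: t i a => [|t IH] i a neq_a.
  have [Y [omY HY]] := init.
  by rewrite mulr0 subr0 /zscore (softmax_score_gap _ _ _ omY); apply: HY.
have UM_t : UM eta M astar (cexp_strategy eta y t).
  exists (cum y t); split => // i' a' neq_a'; apply: le_trans (IH i' a' neq_a') _.
  by rewrite lerBlDr lerDl !mulr_ge0 // ltW.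
have gap := Ueps_gap (UM_sub UM_t) neq_a; rewrite !feedback_score // in gap.
have := IH i a neq_a; rewrite /zscore !score_cumS -natr1.
have : eta * eps <= eta * (score (y t.+1 i) (astar i) - score (y t.+1 i) a).
  by rewrite ler_pM2l.
lra.
Qed.

Lemma offeq_mass_decay t i :
  \sum_(a | a != astar i) cexp_strategy eta y t i a
    <= (k * F)%:R * expR (- M - eta * eps * t%:R).
Proof.
set x := expR (- M - eta * eps * t%:R).
have w_ge0 (a : act F k) : 0 <= cexp_strategy eta y t i a by apply/ltW/softmax_gt0.
apply: le_trans (offeq_mass_le (a0 := astar i) (x := x) w_ge0 (expR_ge0 _) _) _;
  last first.
  by rewrite (softmax_sum _ _ _ (astar i)) mulr1.
move=> a f g fa fas gas ga.
rewrite /cexp_strategy (softmax_ratio _ _ _ a (swap a f g)) score_swap //.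
apply: ler_wpM2r; first exact/ltW/softmax_gt0.
rewrite /x ler_expR.
apply: le_trans (zscore_decay t (swap_neq gas fas)).
by rewrite /zscore -[_ - score _ (astar i)]opprB score_swap // opprB.
Qed.

End Dynamics.

Theorem theorem2 (R : realType) (n F k : nat) (c : 'I_F -> nat -> R)
  (astar : 'I_n -> act F k) (eps : R) (Ueps : set (profile R n F k))
  (M eta : R) (y : nat -> 'I_n -> 'I_F -> R) :
  (forall f l, 0 <= c f l <= 1) ->
  strict_NE c astar ->
  0 < eps ->
  lemma1_nbhd c astar eps Ueps ->
  `| ln (eps / (2 * k * F)%:R) | <= M ->
  UM eta M astar `<=` Ueps ->
  0 < eta ->
  expected_feedback k c eta y ->
  UM eta M astar (cexp_strategy eta y 0) ->
  forall (i : 'I_n) (t : nat),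
    \sum_(a : act F k) `| cexp_strategy eta y t i a - pure R (astar i) a |
      <= (2 * k * F)%:R * expR (- M - eta * eps * t%:R).
Proof.
move=> _ _ eps_gt0 [_ _ Ueps_gap] _ UM_sub eta_gt0 feedback init i t.
rewrite l1_dist_point_mass; last 2 first.
- by move=> a; apply/ltW/softmax_gt0.
- exact: (softmax_sum _ _ _ (astar i)).
rewrite -mulnA natrM -mulrA ler_pM2l //.
exact: (offeq_mass_decay eps_gt0 eta_gt0 Ueps_gap UM_sub feedback init).
Qed.
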